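(* Let $f,h:\mathbb{R}^p\to\mathbb{R}$ be convex functions and suppose that the set of minimizers of $\mathcal{L}(\beta)=f(\beta)+h(\beta)$ over $\mathbb{R}^p$ is nonempty. Let $D=\mathrm{diag}(d_1,\dots,d_p)$ with all $d_j>0$, let $\gamma\in(0,1)$, and let $\hat\beta^0\in\mathbb{R}^p$ be arbitrary. Consider the alternating linearization method (described in the context) run with the stopping test omitted, so that it generates infinite sequences $\{\hat\beta^k\}$, $\{s_f^k\}$, $\{s_h^k\}$. Then the sequence $\{\hat\beta^k\}$ converges to a minimizer $\beta^*$ of $\mathcal{L}$. Moreover, every accumulation point $(s_f^*,s_h^* )$ of the sequence $\{(s_f^k,s_h^k)\}$ satisfies $s_f^*\in\partial f(\beta^* )$, $s_h^*\in\partial h(\beta^* )$, and $s_f^*+s_h^*=0$.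
   Context: Notation: $\|v\|_D^2=v^TDv$. The alternating linearization method: set $\tilde\beta_f^0=\hat\beta^0$ and choose an arbitrary subgradient $s_f^0\in\partial f(\tilde\beta_f^0)$. At iteration $k$ (suppressing $k$; $\hat\beta$ is the current center, $s_f$ the current subgradient of $f$ at the current point $\tilde\beta_f$): (1) $h$-subproblem: with $\tilde f(\beta)=f(\tilde\beta_f)+s_f^T(\beta-\tilde\beta_f)$, let $\tilde\beta_h$ be the minimizer of $\tilde f(\beta)+h(\beta)+\tfrac12\|\beta-\hat\beta\|_D^2$, and set $s_h=-s_f-D(\tilde\beta_h-\hat\beta)$ (so $s_h\in\partial h(\tilde\beta_h)$). (2) $f$-subproblem: with $\tilde h(\beta)=h(\tilde\beta_h)+s_h^T(\beta-\tilde\beta_h)$, let the new $\tilde\beta_f$ be the minimizer of $f(\beta)+\tilde h(\beta)+\tfrac12\|\beta-\hat\beta\|_D^2$, and set the new $s_f=-s_h-D(\tilde\beta_f-\hat\beta)$ (so $s_f\in\partial f(\tilde\beta_f)$). (3) Update step: if $f(\tilde\beta_f)+h(\tilde\beta_f)\le(1-\gamma)\big[f(\hat\beta)+h(\hat\beta)\big]+\gamma\big[f(\tilde\beta_f)+\tilde h(\tilde\beta_f)\big]$, then set $\hat\beta\leftarrow\tilde\beta_f$; otherwise $\hat\beta$ is unchanged. The values after iteration $k$ are $\hat\beta^{k}$, $s_f^k$, $s_h^k$. (The stopping test, which would terminate when $f(\tilde\beta_f)+\tilde h(\tilde\beta_f)\ge f(\hat\beta)+h(\hat\beta)-\varepsilon$,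 is not applied.) *)

From Stdlib Require Import Reals.
From mathcomp Require Import all_boot.
Set Implicit Arguments.
Unset Strict Implicit.
Unset Printing Implicit Defensive.
Local Open Scope R_scope.

Definition vec (p : nat) := 'I_p -> R.

Definition vadd p (u v : vec p) : vec p := fun i => u i + v i.
Definition vsub p (u v : vec p) : vec p := fun i => u i - v i.
Definition vscale p (a : R) (u : vec p) : vec p := fun i => a * u i.

Definition dot p (u v : vec p) : R := \big[Rplus/0]_(i < p) (u i * v i).

(* D = diag(d); Dmul d v = D v ;  normD2 d v = ||v||_D^2 = v^T D v *)
Definition Dmul p (d v : vec p) : vec p := fun i => d i * v i.
Definition normD2 p (d v : vec p) : R := dot v (Dmul d v).

Definition convex_fun p (f : vec p -> R) : Prop :=
  forall (x y : vec p) (t : R), 0 <= t <= 1 ->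
    f (vadd (vscale t x) (vscale (1 - t) y)) <= t * f x + (1 - t) * f y.

Definition subgrad p (f : vec p -> R) (x s : vec p) : Prop :=
  forall y : vec p, f x + dot s (vsub y x) <= f y.

Definition is_minimizer p (F : vec p -> R) (x : vec p) : Prop :=
  forall y : vec p, F x <= F y.

(* One iteration (k -> k+1) of the alternating linearization method,
   starting from center bhat k, current point bf k and subgradient sf k;
   produces bh (k+1), sh (k+1), bf (k+1), sf (k+1), bhat (k+1). *)
Definition alin_step p (f h : vec p -> R) (d : vec p) (gamma : R)
  (bhat bf bh sf sh : nat -> vec p) (k : nat) : Prop :=
  let c := bhat k in
  let ftil := fun b => f (bf k) + dot (sf k) (vsub b (bf k)) in
  is_minimizer (fun b => ftil b + h b + / 2 * normD2 d (vsub b c)) (bh (S k)) /\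
  sh (S k) = vsub (vscale (-1) (sf k)) (Dmul d (vsub (bh (S k)) c)) /\
  let htil := fun b => h (bh (S k)) + dot (sh (S k)) (vsub b (bh (S k))) in
  is_minimizer (fun b => f b + htil b + / 2 * normD2 d (vsub b c)) (bf (S k)) /\
  sf (S k) = vsub (vscale (-1) (sh (S k))) (Dmul d (vsub (bf (S k)) c)) /\
  (f (bf (S k)) + h (bf (S k)) <=
     (1 - gamma) * (f c + h c) + gamma * (f (bf (S k)) + htil (bf (S k))) ->
   bhat (S k) = bf (S k)) /\
  (~ (f (bf (S k)) + h (bf (S k)) <=
     (1 - gamma) * (f c + h c) + gamma * (f (bf (S k)) + htil (bf (S k)))) ->
   bhat (S k) = c).

Definition accum_point2 p (u v : nat -> vec p) (a b : vec p) : Prop :=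
  forall eps : R, 0 < eps -> forall N : nat, exists k : nat, (N <= k)%nat /\
    forall i : 'I_p, Rabs (u k i - a i) < eps /\ Rabs (v k i - b i) < eps.

(* Let L = f + h.  From the optimality conditions of the two
   subproblems (convexity + the proximal term) we get sh(k+1) in dh(bh(k+1))
   and sf(k) in df(bf(k)), which yield the basic inequalities of one step.
   Two Lyapunov-type functions drive the argument, for a minimizer x of L:
   - the merit value P_k = (L(bhat_k) - [value of the h-subproblem])
       + 4/gamma (L(bhat_k) - L(x)) is nonincreasing, decreasing by at least
       2 v_k at serious steps, where v_k = L(bhat_k) - [model value] is the
       predicted decrease; at null steps its decrease controls the
       linearization error of h, so local Lipschitz continuity of the convex
       function h forces v_k -> 0;
   - the Fejer function W_k(x) = ||bhat_k - x||_D^2 + 2/gamma (L(bhat_k) - L(x))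
       is nonincreasing for every minimizer x.
   Hence the iterates stay bounded, L(bhat_k) -> min L, a cluster point xb of
   (bhat_k) (Bolzano-Weierstrass) is a minimizer (lower semicontinuity of
   convex functions), W_k(xb) -> 0 so bhat_k -> xb, and passing to the limit
   in the subgradient inequalities of sf(k+1), sh(k+1) (whose sum is
   -D(bf(k+1) - bhat_k), of size O(sqrt v_k)) characterizes the cluster
   points of the subgradients. *)
From Pilot Require Import Defs.
From HB Require Import structures.
From Stdlib Require Import Reals Lra Lia Psatz FunctionalExtensionality.
From Stdlib Require Import ClassicalEpsilon.
From mathcomp Require Import all_boot zify.
Set Implicit Arguments.
Unset Strict Implicit.
Local Open Scope R_scope.

(* (R, +, 0) as a commutative monoid, so that the generic bigop lemmas
   (splitting, bigD1, ...) apply to the sums \big[Rplus/0] of Defs. *)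
HB.instance Definition _ :=
  Monoid.isComLaw.Build R 0 Rplus (fun x y z => esym (Rplus_assoc x y z))
    Rplus_comm Rplus_0_l.

Section FiniteSums.
Variable p : nat.
Implicit Types F G : 'I_p -> R.

Lemma sumD F G : \big[Rplus/0]_(i < p) (F i + G i) =
  \big[Rplus/0]_(i < p) F i + \big[Rplus/0]_(i < p) G i.
Proof. by rewrite big_split. Qed.

Lemma sumZ a F : \big[Rplus/0]_(i < p) (a * F i) = a * \big[Rplus/0]_(i < p) F i.
Proof. by elim/big_rec2: _ => [|i x y _ ->] /=; ring. Qed.

Lemma sumN F : \big[Rplus/0]_(i < p) (- F i) = - \big[Rplus/0]_(i < p) F i.
Proof. by elim/big_rec2: _ => [|i x y _ ->] /=; ring. Qed.

Lemma sumB F G : \big[Rplus/0]_(i < p) (F i - G i) =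
  \big[Rplus/0]_(i < p) F i - \big[Rplus/0]_(i < p) G i.
Proof. by rewrite /Rminus sumD sumN. Qed.

Lemma sum_le F G : (forall i, F i <= G i) ->
  \big[Rplus/0]_(i < p) F i <= \big[Rplus/0]_(i < p) G i.
Proof. by move=> FG; elim/big_ind2: _ => // *; lra. Qed.

Lemma sum_ge0 F : (forall i, 0 <= F i) -> 0 <= \big[Rplus/0]_(i < p) F i.
Proof. by move=> F0; elim/big_ind: _ => // *; lra. Qed.

Lemma sum_ge_term F j : (forall i, 0 <= F i) -> F j <= \big[Rplus/0]_(i < p) F i.
Proof.
move=> F0; rewrite (bigD1 j) //=.
set rest := \big[Rplus/0]_(i < p | i != j) F i.
have : 0 <= rest by rewrite /rest; elim/big_ind: _ => // *; lra.
lra.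
Qed.

End FiniteSums.

(* Identities between expressions built from dot, normD2 and the pointwise
   vector operations: unfold everything to one sum and compare termwise. *)
Ltac vec_ring :=
  repeat match goal with x := _ |- _ => subst x end;
  unfold dot, normD2, Dmul, vsub, vadd, vscale;
  repeat progress (rewrite -?sumZ -?sumN -?sumD -?sumB);
  apply eq_bigr => ? _; first [ring | field].

Lemma abs_le_of_sq a t : 0 < t -> a * a <= t * t -> Rabs a <= t.
Proof. by move=> t0 at_; rewrite /Rabs; case: Rcase_abs => _; nra. Qed.

Section DNorm.
Variables (p : nat) (d : vec p).
Hypothesis d_pos : forall i, 0 < d i.
Implicit Types u v w x y z : vec p.

Lemma normD2_ge0 u : 0 <= normD2 d u.
Proof.
apply: sum_ge0 => i; rewrite /Dmul.
by have := d_pos i; nra.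
Qed.

Lemma normD2_coord u j : d j * (u j * u j) <= normD2 d u.
Proof.
have -> : d j * (u j * u j) = u j * Dmul d u j by rewrite /Dmul; ring.
rewrite /normD2 /dot; apply: (sum_ge_term (F := fun i => u i * Dmul d u i)) => i.
by rewrite /Dmul; have := d_pos i; nra.
Qed.

Lemma normD2_sym x y : normD2 d (vsub x y) = normD2 d (vsub y x).
Proof. by vec_ring. Qed.

Lemma normD2_zero x : normD2 d (vsub x x) = 0.
Proof. by rewrite /normD2 /dot /Dmul /vsub big1 // => i _; ring. Qed.

Lemma young u w tau :
  2 * tau * dot (Dmul d u) w <= tau * tau * normD2 d u + normD2 d w.
Proof.
have := normD2_ge0 (vsub (vscale tau u) w).
have -> : normD2 d (vsub (vscale tau u) w) =
  tau * tau * normD2 d u + normD2 d w - 2 * tau * dot (Dmul d u) w by vec_ring.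
lra.
Qed.

Lemma normD2_triangle x y z :
  normD2 d (vsub x z) <= 2 * normD2 d (vsub x y) + 2 * normD2 d (vsub z y).
Proof.
have := normD2_ge0 (vsub (vadd x z) (vscale 2 y)).
have -> : normD2 d (vsub (vadd x z) (vscale 2 y)) =
  2 * normD2 d (vsub x y) + 2 * normD2 d (vsub z y) - normD2 d (vsub x z)
  by vec_ring.
lra.
Qed.

(* Comparison constants between the D-norm and the coordinates. *)
Definition Dinv := 1 + \big[Rplus/0]_(i < p) / d i.
Definition Dsum := \big[Rplus/0]_(i < p) d i.

Lemma Dinv_ge1 : 1 <= Dinv.
Proof.
have := sum_ge0 (fun j => Rlt_le _ _ (Rinv_0_lt_compat _ (d_pos j))).
rewrite /Dinv; lra.
Qed.

Lemma Dsum_ge0 : 0 <= Dsum.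
Proof. by apply: sum_ge0 => i; apply: Rlt_le. Qed.

Lemma coord_sq_le u i : u i * u i <= normD2 d u * Dinv.
Proof.
have di := d_pos i.
have inv_le : / d i <= Dinv.
  have := sum_ge_term i (fun j => Rlt_le _ _ (Rinv_0_lt_compat _ (d_pos j))).
  have := sum_ge0 (fun j => Rlt_le _ _ (Rinv_0_lt_compat _ (d_pos j))).
  rewrite /Dinv; lra.
have : u i * u i <= normD2 d u * / d i.
  apply: (Rmult_le_reg_l (d i)) => //.
  have -> : d i * (normD2 d u * / d i) = normD2 d u by field; lra.
  by have := normD2_coord u i; lra.
have : normD2 d u * / d i <= normD2 d u * Dinv.
  by apply: Rmult_le_compat_l => //; apply: normD2_ge0.
lra.
Qed.

Lemma coord_bound u E i : normD2 d u <= E -> Rabs (u i) <= 1 + E * Dinv.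
Proof.
move=> uE.
have := coord_sq_le u i; have := Dinv_ge1.
have : Rabs (u i) <= 1 + u i * u i by rewrite /Rabs; case: Rcase_abs => _; nra.
nra.
Qed.

Lemma coord_small u t : 0 < t -> normD2 d u * Dinv <= t * t ->
  forall i, Rabs (u i) <= t.
Proof. by move=> t0 ut i; apply: abs_le_of_sq => //; have := coord_sq_le u i; lra. Qed.

Lemma normD2_small u rho : (forall i, Rabs (u i) <= rho) ->
  normD2 d u <= rho * rho * Dsum.
Proof.
move=> urho; rewrite /normD2 /dot /Dmul /Dsum -sumZ; apply: sum_le => i.
have := urho i; have := d_pos i; have := Rabs_pos (u i).
have -> : u i * (d i * u i) = d i * (Rabs (u i) * Rabs (u i)).
  by rewrite /Rabs; case: Rcase_abs => _; ring.
move=> a0 di ar; have : Rabs (u i) * Rabs (u i) <= rho * rho by nra.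
nra.
Qed.

End DNorm.

Lemma dot_lower p (a b : vec p) eps : (forall i, Rabs (a i) <= eps) ->
  - (eps * \big[Rplus/0]_(i < p) Rabs (b i)) <= dot a b.
Proof.
move=> aeps; rewrite /dot -sumZ -sumN; apply: sum_le => i.
have := aeps i; move: (a i) (b i) => x y.
by rewrite /Rabs; case: Rcase_abs => ?; case: Rcase_abs => ? ?; nra.
Qed.

Lemma le_of_le_eps a b C : 0 <= C ->
  (forall eps, 0 < eps -> a <= b + C * eps) -> a <= b.
Proof.
move=> C0 H; case: (Rle_or_lt a b) => // ab.
have eps0 : 0 < (a - b) / (2 * (C + 1)) by apply: Rdiv_lt_0_compat; lra.
have := H _ eps0.
have : C * ((a - b) / (2 * (C + 1))) <= (a - b) / 2.
  apply: (Rmult_le_reg_r (2 * (C + 1))); first lra.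
  field_simplify; try lra; nra.
lra.
Qed.

Lemma nonneg_of_small_t A Q : 0 <= Q ->
  (forall t, 0 < t < 1 -> 0 <= A + t * Q) -> 0 <= A.
Proof.
move=> Q0 H; case: (Rle_or_lt 0 A) => // A0.
set t := - A / (2 * (Q - A + 1)).
have t01 : 0 < t < 1.
  rewrite /t; split; first by apply: Rdiv_lt_0_compat; lra.
  by apply: (Rmult_lt_reg_r (2 * (Q - A + 1))); [lra | field_simplify; lra].
have : t * Q <= - A / 2.
  rewrite /t; apply: (Rmult_le_reg_r (2 * (Q - A + 1))); first lra.
  field_simplify; [nra | lra].
have := H t t01; lra.
Qed.

Definition in_box p (x0 : vec p) (r : R) (x : vec p) :=
  forall i, Rabs (x i - x0 i) <= r.

Definition modulus p (g : vec p -> R) (x0 : vec p) (r K : R) :=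
  forall x y t, 0 < t <= 1 -> in_box x0 r x -> in_box x t y -> g y <= g x + t * K.

Section ConvexFunctions.
Variables (p : nat) (g : vec p -> R).
Hypothesis g_convex : convex_fun g.
Implicit Types x y z : vec p.

Lemma convex_comb x y t z : 0 <= t <= 1 ->
  (forall i, z i = t * x i + (1 - t) * y i) -> g z <= t * g x + (1 - t) * g y.
Proof.
move=> t01 zE; have -> : z = vadd (vscale t x) (vscale (1 - t) y).
  by apply: functional_extensionality => i; rewrite zE.
exact: g_convex.
Qed.

(* Optimality condition of a proximal problem: if b minimizes
   g(y) + <a, y - z> + 1/2 ||y - c||_D^2, then -a - D(b - c) is a subgradient
   of g at b.  (Compare b with b + t(y - b) and let t -> 0.) *)
Lemma prox_subgrad (d a z c b : vec p) : (forall i, 0 < d i) ->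
  (forall y, g b + dot a (vsub b z) + /2 * normD2 d (vsub b c) <=
             g y + dot a (vsub y z) + /2 * normD2 d (vsub y c)) ->
  subgrad g b (vsub (vscale (-1) a) (Dmul d (vsub b c))).
Proof.
move=> d_pos bmin y.
set X := dot a (vsub y b) + dot (Dmul d (vsub b c)) (vsub y b).
have -> : dot (vsub (vscale (-1) a) (Dmul d (vsub b c))) (vsub y b) = - X
  by rewrite /X; vec_ring.
have Q0 := normD2_ge0 d_pos (vsub y b).
suff : 0 <= g y - g b + X by lra.
apply: (nonneg_of_small_t (Q := /2 * normD2 d (vsub y b))); first lra.
move=> t t01.
set yt := vadd (vscale t y) (vscale (1 - t) b).
have cvx : g yt <= t * g y + (1 - t) * g b by apply: g_convex; lra.
have ineq := bmin yt.
have expand : dot a (vsub yt z) + /2 * normD2 d (vsub yt c) =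
  dot a (vsub b z) + /2 * normD2 d (vsub b c) + t * X +
  t * (t * (/2 * normD2 d (vsub y b))) by rewrite /yt /X; vec_ring.
have : 0 <= t * (g y - g b + X + t * (/2 * normD2 d (vsub y b))) by nra.
move=> pos; apply: (Rmult_le_reg_l t); lra.
Qed.

Definition upd x (j : 'I_p) (a : R) : vec p := fun i => if i == j then a else x i.

Lemma line_bound x0 j T s : 0 < T -> Rabs s <= T ->
  g (upd x0 j (x0 j + s)) <=
  Rmax (Rmax (g (upd x0 j (x0 j + T))) (g (upd x0 j (x0 j - T)))) (g x0).
Proof.
move=> T0 sT.
have M1 := Rmax_l (g (upd x0 j (x0 j + T))) (g (upd x0 j (x0 j - T))).
have M2 := Rmax_r (g (upd x0 j (x0 j + T))) (g (upd x0 j (x0 j - T))).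
set A := Rmax _ _ in M1 M2 *.
have M3 := Rmax_l A (g x0); have M4 := Rmax_r A (g x0).
(* s = (|s|/T) (+-T) + (1 - |s|/T) 0 *)
have comb : forall e, e = T \/ e = - T -> 0 <= s / e <= 1 ->
    g (upd x0 j (x0 j + s)) <= s / e * g (upd x0 j (x0 j + e)) + (1 - s / e) * g x0.
  move=> e eT se; have e0 : e <> 0 by case: eT => ->; lra.
  apply: convex_comb => // i.
  by rewrite /upd; case: eqP => [->|_]; field.
case: (Rle_or_lt 0 s) => s0.
- rewrite Rabs_right in sT; last lra.
  have st : 0 <= s / T <= 1.
    split; first by apply: Rmult_le_pos; [lra | apply/Rlt_le/Rinv_0_lt_compat].
    by apply: (Rmult_le_reg_r T) => //; field_simplify; lra.
  have := comb T (or_introl erefl) st; nra.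
- rewrite Rabs_left in sT; last lra.
  have st : 0 <= s / - T <= 1.
    have -> : s / - T = - s / T by field; lra.
    split; first by apply: Rmult_le_pos; [lra | apply/Rlt_le/Rinv_0_lt_compat].
    by apply: (Rmult_le_reg_r T) => //; field_simplify; lra.
  have := comb (- T) (or_intror erefl) st.
  have -> : x0 j + - T = x0 j - T by ring.
  nra.
Qed.

(* g is bounded above on the box where only the first m coordinates may
   move by at most r; by induction on m, halving along each new coordinate. *)
Lemma bounded_on_partial_box x0 m r : 0 < r -> exists M, forall y,
  (forall i : 'I_p, (i < m)%N -> Rabs (y i - x0 i) <= r) ->
  (forall i : 'I_p, (m <= i)%N -> y i = x0 i) -> g y <= M.
Proof.
elim: m r => [|m IH] r r0.
  exists (g x0) => y _ fixed.
  have -> : y = x0 by apply: functional_extensionality => i; apply: fixed.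
  exact: Rle_refl.
case: (ltnP m p) => [mp | pm]; last first.
  have [M HM] := IH r r0; exists M => y near fixed; apply: HM.
  - by move=> i im; apply: near; apply: ltnW.
  - by move=> i mi; have := ltn_ord i; lia.
set j := Ordinal mp.
have [M1 HM1] := IH (2 * r) ltac:(lra).
set M2 := Rmax (Rmax (g (upd x0 j (x0 j + 2 * r))) (g (upd x0 j (x0 j - 2 * r))))
  (g x0).
exists (/2 * M2 + /2 * M1) => y near fixed.
(* y is the midpoint of a point on the j-th coordinate line and a point of
   the m-coordinate box of radius 2r. *)
set z : vec p := fun i => if (i < m)%N then x0 i + 2 * (y i - x0 i) else x0 i.
set y2 := upd x0 j (x0 j + 2 * (y j - x0 j)).
have Hy2 : g y2 <= M2.
  apply: line_bound; first lra.
  by have := near j (ltnSn m); rewrite Rabs_mult (Rabs_right 2); lra.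
have Hz : g z <= M1.
  apply: HM1 => i im; rewrite /z.
  - rewrite im; have := near i (ltnW im).
    have -> : x0 i + 2 * (y i - x0 i) - x0 i = 2 * (y i - x0 i) by ring.
    by rewrite Rabs_mult (Rabs_right 2); lra.
  - by have -> : (i < m)%N = false by apply/negbTE; rewrite -leqNgt.
have : g y <= /2 * g y2 + (1 - /2) * g z.
  apply: convex_comb; first lra.
  move=> i; rewrite /y2 /z /upd; case: eqP => [->|ij].
    by rewrite /= ltnn; field.
  case: ltnP => im; first field.
  have mi : (m.+1 <= i)%N.
    by rewrite ltn_neqAle im andbT; apply/eqP => E; apply: ij; apply: val_inj.
  by rewrite (fixed i mi); field.
lra.
Qed.

Lemma bounded_on_box x0 r : 0 < r -> exists M, forall y, in_box x0 r y -> g y <= M.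
Proof.
move=> r0; have [M HM] := bounded_on_partial_box x0 p r0.
exists M => y near; apply: HM => [i _|i pi]; first exact: near.
by have := ltn_ord i; lia.
Qed.

Lemma convex_modulus x0 r : 0 < r -> exists K, 0 <= K /\ modulus g x0 r K.
Proof.
move=> r0; have [M HM] := bounded_on_box x0 (ltac:(lra) : 0 < r + 1).
have gx0 : g x0 <= M by apply: HM => i; rewrite Rminus_diag Rabs_R0; lra.
exists (2 * (M - g x0)); split; first lra.
move=> x y t t01 xr yt.
(* y = t z + (1 - t) x with z in the box of radius r + 1 around x0 *)
set z : vec p := fun i => x i + (y i - x i) / t.
have gz : g z <= M.
  apply: HM => i; rewrite /z.
  have -> : x i + (y i - x i) / t - x0 i = (x i - x0 i) + (y i - x i) * / t
    by field; lra.
  apply: Rle_trans (Rabs_triang _ _) _.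
  rewrite Rabs_mult (Rabs_right (/ t)); last by apply/Rle_ge/Rlt_le/Rinv_0_lt_compat; lra.
  have : Rabs (y i - x i) * / t <= 1.
    apply: (Rmult_le_reg_r t); first lra.
    by rewrite Rmult_assoc Rinv_l; [have := yt i; lra | lra].
  by have := xr i; lra.
have gy : g y <= t * g z + (1 - t) * g x.
  by apply: convex_comb => [|i]; [lra | rewrite /z; field; lra].
(* and g x0 <= (g x + g(2 x0 - x)) / 2 bounds g x from below *)
have gmid : g x0 <= /2 * g x + (1 - /2) * g (fun i => 2 * x0 i - x i).
  by apply: convex_comb => [|i]; [lra | field].
have grefl : g (fun i => 2 * x0 i - x i) <= M.
  apply: HM => i; have -> : 2 * x0 i - x i - x0 i = - (x i - x0 i) by ring.
  by rewrite Rabs_Ropp; have := xr i; lra.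
nra.
Qed.

Lemma convex_lsc x0 eps : 0 < eps -> exists del, 0 < del /\
  forall y, in_box x0 del y -> g x0 - eps <= g y.
Proof.
move=> eps0; have [K [K0 HK]] := convex_modulus x0 (ltac:(lra) : 0 < 1).
set del := Rmin 1 (eps / (K + 1)).
have del1 : del <= 1 by apply: Rmin_l.
have del0 : 0 < del by apply: Rmin_pos; [lra | apply: Rdiv_lt_0_compat; lra].
have delK : del * K <= eps.
  have : del * (K + 1) <= eps.
    apply: (Rmult_le_reg_r (/ (K + 1))); first by apply: Rinv_0_lt_compat; lra.
    rewrite Rmult_assoc Rinv_r; last lra.
    by rewrite Rmult_1_r; apply: Rmin_r.
  nra.
exists del; split => // y near.
have x0r : in_box x0 1 x0 by move=> i; rewrite Rminus_diag Rabs_R0; lra.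
(* the reflected point 2 x0 - y is also del-close to x0 *)
have mid : g x0 <= /2 * g y + (1 - /2) * g (fun i => 2 * x0 i - y i).
  by apply: convex_comb => [|i]; [lra | field].
have : g (fun i => 2 * x0 i - y i) <= g x0 + del * K.
  apply: HK => // i.
  by rewrite (_ : 2 * x0 i - y i - x0 i = - (y i - x0 i)); [rewrite Rabs_Ropp | ring].
lra.
Qed.

Lemma linearization_error_shift x0 r K b s x z t :
  modulus g x0 r K -> subgrad g b s -> 0 < t <= 1 ->
  in_box x0 r b -> in_box x0 r z -> in_box z t x ->
  g x - dot s (vsub x b) <= g z - dot s (vsub z b) + 2 * (t * K).
Proof.
move=> HK sub t01 br zr xz.
have gx : g x <= g z + t * K by apply: HK.
have gb : g (vadd b (vsub z x)) <= g b + t * K.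
  apply: HK => // i; rewrite /vadd /vsub.
  have -> : b i + (z i - x i) - b i = - (x i - z i) by ring.
  by rewrite Rabs_Ropp; exact: xz.
have := sub (vadd b (vsub z x)).
have -> : dot s (vsub (vadd b (vsub z x)) b) = dot s (vsub z b) - dot s (vsub x b)
  by vec_ring.
lra.
Qed.

End ConvexFunctions.

Definition strictly_increasing (phi : nat -> nat) := forall n, (phi n < phi n.+1)%N.

Lemma strictly_increasing_ge phi : strictly_increasing phi -> forall n, (n <= phi n)%N.
Proof. by move=> phi_incr; elim=> [|n IH] //; have := phi_incr n; lia. Qed.

Lemma strictly_increasing_lt phi : strictly_increasing phi ->
  forall a b, (a < b)%N -> (phi a < phi b)%N.
Proof.
move=> phi_incr a; elim=> [|b IH] ab; first lia.
case: (ltnP a b) => [lt_ab | le_ba]; first by have := IH lt_ab; have := phi_incr b; lia.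
by have -> : a = b by lia.
Qed.

Definition vec_lim p (u : nat -> vec p) (l : vec p) := forall eps, 0 < eps ->
  exists N, forall n, (N <= n)%N -> forall i, Rabs (u n i - l i) < eps.

Lemma inv_INR_small eps : 0 < eps ->
  exists N : nat, forall n, (N <= n)%N -> / (INR n + 1) < eps.
Proof.
move=> eps0; have [N [N1 N0]] := archimed_cor1 eps eps0; exists N => n Nn.
have : INR N <= INR n by apply: le_INR; lia.
have : 0 < INR N by apply: lt_0_INR; lia.
move=> ? ?; apply: Rle_lt_trans N1; apply: Rinv_le_contravar; lra.
Qed.

(* Bolzano-Weierstrass for real sequences, in the form of a convergent
   subsequence (Stdlib provides a cluster point). *)
Lemma bolzano_weierstrass_R (u : nat -> R) B : (forall n, Rabs (u n) <= B) ->
  exists phi, strictly_increasing phi /\ exists l, forall eps, 0 < eps ->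
    exists N, forall n, (N <= n)%N -> Rabs (u (phi n) - l) < eps.
Proof.
move=> uB.
have bnd : forall n, - B <= u n <= B.
  by move=> n; have := uB n; rewrite /Rabs; case: Rcase_abs => ? ?; lra.
have [l cluster] :=
  Bolzano_Weierstrass u (fun c => - B <= c <= B) (compact_P3 (- B) B) bnd.
have close : forall n N : nat, exists k : nat, (N <= k)%N /\ Rabs (u k - l) < / (INR n + 1).
  move=> n N; have pos : 0 < / (INR n + 1).
    by apply: Rinv_0_lt_compat; have := pos_INR n; lra.
  have nbhd : neighbourhood (fun y => Rabs (y - l) < / (INR n + 1)) l.
    by exists (mkposreal _ pos).
  have [k [Nk uk]] := cluster _ N nbhd.
  by exists k; split => //; apply/leP.
pose next n N := proj1_sig (constructive_indefinite_description _ (close n N)).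
have nextP : forall n N, (N <= next n N)%N /\ Rabs (u (next n N) - l) < / (INR n + 1).
  by move=> n N; rewrite /next; case: constructive_indefinite_description.
(* phi (n+1) is an index beyond phi n at distance < 1/(n+2) from l *)
pose phi := fix phi n := if n is m.+1 then next n (phi m).+1 else next 0%N 0%N.
exists phi; split.
  by move=> n; have := proj1 (nextP n.+1 (phi n).+1); rewrite /=; lia.
exists l => eps eps0; have [N HN] := inv_INR_small eps0; exists N => n Nn.
have : Rabs (u (phi n) - l) < / (INR n + 1) by case: n Nn => [|n] _; exact: (proj2 (nextP _ _)).
by have := HN n Nn; lra.
Qed.

Lemma bolzano_weierstrass p (c : nat -> vec p) B : (forall k i, Rabs (c k i) <= B) ->
  exists phi, strictly_increasing phi /\ exists l, vec_lim (fun n => c (phi n)) l.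
Proof.
move=> cB.
suff /(_ p) [phi [phi_incr [l lim]]] : forall m, exists phi, strictly_increasing phi /\
  exists l : vec p, forall eps, 0 < eps -> exists N, forall n, (N <= n)%N ->
    forall i : 'I_p, (i < m)%N -> Rabs (c (phi n) i - l i) < eps.
  exists phi; split => //; exists l => eps eps0.
  by have [N HN] := lim eps eps0; exists N => n Nn i; apply: HN.
elim=> [|m [phi [phi_incr [l lim]]]].
  exists id; split; first by move=> n /=.
  by exists (fun _ => 0) => eps eps0; exists 0%N => n _ i; lia.
case: (ltnP m p) => [mp | pm]; last first.
  exists phi; split => //; exists l => eps eps0; have [N HN] := lim eps eps0.
  by exists N => n Nn i _; apply: HN => //; have := ltn_ord i; lia.
set j := Ordinal mp.
have [psi [psi_incr [lj limj]]] :=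
  bolzano_weierstrass_R (u := fun n => c (phi n) j) (fun n => cB _ _).
exists (fun n => phi (psi n)); split.
  by move=> n; apply: strictly_increasing_lt.
exists (upd l j lj) => eps eps0.
have [N1 HN1] := lim eps eps0; have [N2 HN2] := limj eps eps0.
exists (maxn N1 N2) => n Nn i im; rewrite /upd; case: eqP => [->|ij].
  by apply: HN2; lia.
have im' : (i < m)%N.
  have : nat_of_ord i <> m by move=> E; apply: ij; apply: val_inj; rewrite /= E.
  lia.
by apply: HN1 => //; have := strictly_increasing_ge psi_incr n; lia.
Qed.

Lemma nonincreasing_le (u : nat -> R) : (forall k, u k.+1 <= u k) ->
  forall k j, (k <= j)%N -> u j <= u k.
Proof.
move=> dec k; elim=> [|j IH] kj.
  have -> : k = 0%N by lia.
  exact: Rle_refl.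
case: (ltnP k j.+1) => [lt_kj | le_jk].
  by have := IH ltac:(lia); have := dec j; lra.
have -> : k = j.+1 by lia.
exact: Rle_refl.
Qed.

Lemma decrements_vanish (u : nat -> R) : (forall k, u k.+1 <= u k) ->
  (forall k, 0 <= u k) ->
  forall eta, 0 < eta -> exists N, forall k, (N <= k)%N -> u k - u k.+1 < eta.
Proof.
move=> dec u0 eta eta0.
have lb : has_lb u by exists 0 => x [i ->]; rewrite /opp_seq; have := u0 i; lra.
have [l ul] := decreasing_cv u dec lb.
have [N HN] := ul (eta / 2) ltac:(lra); exists N => k Nk.
have := HN k ltac:(lia); have := HN k.+1 ltac:(lia).
by rewrite /R_dist /Rabs; do 2 case: Rcase_abs => ?; lra.
Qed.

Definition cluster_point p (u : nat -> vec p) (a : vec p) := forall eps, 0 < eps ->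
  forall N, exists k, (N <= k)%N /\ forall i, Rabs (u k i - a i) < eps.

Lemma accum_point2_shift p (u v : nat -> vec p) a b : accum_point2 u v a b ->
  accum_point2 (fun k => u k.+1) (fun k => v k.+1) a b.
Proof.
move=> acc eps eps0 N; have [[|k] [Nk close]] := acc eps eps0 N.+1; first lia.
by exists k; split => //; lia.
Qed.

Lemma accum_point2_fst p (u v : nat -> vec p) a b : accum_point2 u v a b -> cluster_point u a.
Proof. by move=> acc eps eps0 N; have [k [Nk close]] := acc eps eps0 N; exists k; split => // i; case: (close i). Qed.

Lemma accum_point2_snd p (u v : nat -> vec p) a b : accum_point2 u v a b -> cluster_point v b.
Proof. by move=> acc eps eps0 N; have [k [Nk close]] := acc eps eps0 N; exists k; split => // i; case: (close i). Qed.

Lemma subgrad_of_cluster p (g : vec p -> R) x s (a : nat -> vec p) (err : nat -> R) :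
  (forall k y, g x + dot (a k) (vsub y x) - err k <= g y) ->
  (forall eps, 0 < eps -> exists N, forall k, (N <= k)%N -> err k < eps) ->
  cluster_point a s -> subgrad g x s.
Proof.
move=> approx err0 cl y.
set S := \big[Rplus/0]_(i < p) Rabs (vsub y x i).
have S0 : 0 <= S by apply: sum_ge0 => i; apply: Rabs_pos.
apply: (le_of_le_eps (C := 1 + S)); first lra.
move=> eps eps0; have [N HN] := err0 eps eps0; have [k [Nk close]] := cl eps eps0 N.
have := approx k y; have := HN k Nk.
have := dot_lower (vsub y x) (a := vsub (a k) s) (fun i => Rlt_le _ _ (close i)).
have -> : dot (vsub (a k) s) (vsub y x) = dot (a k) (vsub y x) - dot s (vsub y x)
  by vec_ring.
rewrite -/S; nra.
Qed.

Lemma sum_zero_of_cluster p (a b : nat -> vec p) sa sb :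
  (forall i eps, 0 < eps -> exists N, forall k, (N <= k)%N -> Rabs (a k i + b k i) < eps) ->
  accum_point2 a b sa sb -> forall i, sa i + sb i = 0.
Proof.
move=> sum0 acc i.
suff : Rabs (sa i + sb i) <= 0.
  by have := Rabs_pos (sa i + sb i); rewrite /Rabs; case: Rcase_abs => ? ? ?; lra.
apply: (le_of_le_eps (C := 3)); first lra.
move=> eps eps0; have [N HN] := sum0 i eps eps0; have [k [Nk close]] := acc eps eps0 N.
have [ca cb] := close i; have := HN k Nk.
have := Rabs_triang (a k i + b k i) (- ((a k i - sa i) + (b k i - sb i))).
rewrite Rabs_Ropp.
have -> : a k i + b k i + - (a k i - sa i + (b k i - sb i)) = sa i + sb i by ring.
have := Rabs_triang (a k i - sa i) (b k i - sb i); lra.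
Qed.

Lemma Un_cv_of_normD2 p (d : vec p) (u : nat -> vec p) l : (forall i, 0 < d i) ->
  (forall eps, 0 < eps -> exists N, forall k, (N <= k)%N -> normD2 d (vsub (u k) l) < eps) ->
  forall i, Un_cv (fun k => u k i) (l i).
Proof.
move=> d_pos small i eps eps0.
have [N HN] :=
  small _ (Rmult_lt_0_compat _ _ (d_pos i) (Rmult_lt_0_compat _ _ eps0 eps0)).
exists N => n Nn; rewrite /R_dist.
have := normD2_coord d_pos (vsub (u n) l) i; have := HN n ltac:(lia).
rewrite /vsub => ? ?.
have : (u n i - l i) * (u n i - l i) < eps * eps.
  by apply: (Rmult_lt_reg_l (d i)); [exact: d_pos | lra].
by rewrite /Rabs; case: Rcase_abs => ? ?; nra.
Qed.

Section AlternatingLinearization.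
Variables (p : nat) (f h : vec p -> R) (d : vec p) (gamma : R).
Variables (bhat bf bh sf sh : nat -> vec p).
Hypotheses (f_convex : convex_fun f) (h_convex : convex_fun h).
Hypothesis d_pos : forall i, 0 < d i.
Hypothesis gamma01 : 0 < gamma < 1.
Hypothesis sf0_subgrad : subgrad f (bf 0%N) (sf 0%N).
Hypothesis step : forall k, alin_step f h d gamma bhat bf bh sf sh k.
Implicit Types x y z : vec p.

Definition obj x := f x + h x.

Definition hlin k x := h (bh k.+1) + dot (sh k.+1) (vsub x (bh k.+1)).

Definition model k := f (bf k.+1) + hlin k (bf k.+1).

Definition pred_decr k := obj (bhat k) - model k.
Definition trial_sq k := normD2 d (vsub (bf k.+1) (bhat k)).

Definition hsub_val k := f (bf k) + dot (sf k) (vsub (bh k.+1) (bf k)) +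
  h (bh k.+1) + /2 * normD2 d (vsub (bh k.+1) (bhat k)).

Definition serious k := obj (bf k.+1) <= (1 - gamma) * obj (bhat k) + gamma * model k.

Lemma step_facts k :
  (forall y, hsub_val k <= f (bf k) + dot (sf k) (vsub y (bf k)) + h y +
                          /2 * normD2 d (vsub y (bhat k))) /\
  sh k.+1 = vsub (vscale (-1) (sf k)) (Dmul d (vsub (bh k.+1) (bhat k))) /\
  (forall y, model k + /2 * trial_sq k <=
             f y + hlin k y + /2 * normD2 d (vsub y (bhat k))) /\
  sf k.+1 = vsub (vscale (-1) (sh k.+1)) (Dmul d (vsub (bf k.+1) (bhat k))) /\
  (serious k -> bhat k.+1 = bf k.+1) /\ (~ serious k -> bhat k.+1 = bhat k).
Proof.
have := step k.
by rewrite /alin_step /is_minimizer /hsub_val /model /trial_sq /serious /hlin /obj.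
Qed.

Lemma sh_formula k :
  sh k.+1 = vsub (vscale (-1) (sf k)) (Dmul d (vsub (bh k.+1) (bhat k))).
Proof. by case: (step_facts k) => _ []. Qed.

Lemma sf_formula k :
  sf k.+1 = vsub (vscale (-1) (sh k.+1)) (Dmul d (vsub (bf k.+1) (bhat k))).
Proof. by case: (step_facts k) => _ [_ [_ []]]. Qed.

Lemma step_cases k :
  (serious k /\ bhat k.+1 = bf k.+1) \/ (~ serious k /\ bhat k.+1 = bhat k).
Proof.
case: (step_facts k) => _ [_ [_ [_ [ser null]]]].
by case: (classic (serious k)) => s; [left | right]; auto.
Qed.

Lemma sh_subgrad k : subgrad h (bh k.+1) (sh k.+1).
Proof.
case: (step_facts k) => hmin [-> _].
apply: (prox_subgrad h_convex (z := bf k)) => // y.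
by have := hmin y; rewrite /hsub_val; lra.
Qed.

Lemma sf_subgrad k : subgrad f (bf k) (sf k).
Proof.
case: k => [|k] //; case: (step_facts k) => _ [_ [fmin [-> _]]].
apply: (prox_subgrad f_convex (z := bh k.+1)) => // y.
by have := fmin y; rewrite /model /trial_sq /hlin; lra.
Qed.

Lemma hlin_le k x : hlin k x <= h x.
Proof. exact: sh_subgrad. Qed.

Lemma trial_sq_ge0 k : 0 <= trial_sq k.
Proof. exact: normD2_ge0. Qed.

(* Lower bound of f y + h z by the model, via the subgradients sf(k+1)
   and sh(k+1), whose sum is -D(bf(k+1) - bhat k). *)
Lemma model_lower_f k y z :
  model k + dot (sf k.+1) (vsub y z) -
  dot (Dmul d (vsub (bf k.+1) (bhat k))) (vsub z (bf k.+1)) <= f y + h z.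
Proof.
have := sf_subgrad k.+1 y; have := hlin_le k z.
have : dot (sh k.+1) (vsub z (bh k.+1)) = dot (sh k.+1) (vsub (bf k.+1) (bh k.+1)) +
  dot (sh k.+1) (vsub z (bf k.+1)) by vec_ring.
have : dot (sf k.+1) (vsub y (bf k.+1)) + dot (sh k.+1) (vsub z (bf k.+1)) =
  dot (sf k.+1) (vsub y z) - dot (Dmul d (vsub (bf k.+1) (bhat k))) (vsub z (bf k.+1))
  by rewrite sf_formula; vec_ring.
rewrite /model /hlin; lra.
Qed.

Lemma model_lower_h k y z :
  model k + dot (sh k.+1) (vsub z y) -
  dot (Dmul d (vsub (bf k.+1) (bhat k))) (vsub y (bf k.+1)) <= f y + h z.
Proof.
have := model_lower_f k y z.
have -> : dot (sf k.+1) (vsub y z) = dot (sh k.+1) (vsub z y) -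
  dot (Dmul d (vsub (bf k.+1) (bhat k))) (vsub y z) by rewrite sf_formula; vec_ring.
have : dot (Dmul d (vsub (bf k.+1) (bhat k))) (vsub y z) +
  dot (Dmul d (vsub (bf k.+1) (bhat k))) (vsub z (bf k.+1)) =
  dot (Dmul d (vsub (bf k.+1) (bhat k))) (vsub y (bf k.+1)) by vec_ring.
lra.
Qed.

Lemma model_lower k x :
  model k - dot (Dmul d (vsub (bf k.+1) (bhat k))) (vsub x (bf k.+1)) <= obj x.
Proof.
have := model_lower_f k x x.
have -> : dot (sf k.+1) (vsub x x) = 0 by rewrite /dot /vsub big1 // => i _; ring.
by rewrite /obj; lra.
Qed.

Lemma trial_le_pred_decr k : trial_sq k <= pred_decr k.
Proof.
have := model_lower k (bhat k).
have -> : dot (Dmul d (vsub (bf k.+1) (bhat k))) (vsub (bhat k) (bf k.+1)) = - trial_sq k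
  by rewrite /trial_sq; vec_ring.
by rewrite /pred_decr; lra.
Qed.

Lemma pred_decr_ge0 k : 0 <= pred_decr k.
Proof. by have := trial_le_pred_decr k; have := trial_sq_ge0 k; lra. Qed.

Lemma obj_center_step k : obj (bhat k.+1) <= obj (bhat k).
Proof.
have := pred_decr_ge0 k.
case: (step_cases k) => [[ser ->] | [_ ->]]; last lra.
by move: ser; rewrite /serious /pred_decr; nra.
Qed.

Lemma hsub_val_le k : hsub_val k <= obj (bhat k).
Proof.
case: (step_facts k) => hmin _; have := hmin (bhat k); rewrite normD2_zero //.
by have := sf_subgrad k (bhat k); rewrite /hsub_val /obj; lra.
Qed.

Lemma hsub_val_model k : hsub_val k + /2 * normD2 d (vsub (bf k.+1) (bh k.+1)) <=
  model k + /2 * trial_sq k.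
Proof.
have expand : dot (sf k) (vsub (bf k.+1) (bf k)) +
    dot (sh k.+1) (vsub (bf k.+1) (bh k.+1)) + /2 * trial_sq k -
    dot (sf k) (vsub (bh k.+1) (bf k)) - /2 * normD2 d (vsub (bh k.+1) (bhat k)) =
  /2 * normD2 d (vsub (bf k.+1) (bh k.+1)) by rewrite /trial_sq sh_formula; vec_ring.
have := sf_subgrad k (bf k.+1).
by rewrite /hsub_val /model /hlin; lra.
Qed.

Lemma hsub_val_after_null k : bhat k.+1 = bhat k ->
  hsub_val k.+1 = model k + /2 * trial_sq k +
    /2 * normD2 d (vsub (bh k.+2) (bf k.+1)) + (h (bh k.+2) - hlin k (bh k.+2)).
Proof.
move=> center.
have expand : dot (sf k.+1) (vsub (bh k.+2) (bf k.+1)) +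
    dot (sh k.+1) (vsub (bh k.+2) (bh k.+1)) +
    /2 * normD2 d (vsub (bh k.+2) (bhat k)) =
  dot (sh k.+1) (vsub (bf k.+1) (bh k.+1)) + /2 * trial_sq k +
    /2 * normD2 d (vsub (bh k.+2) (bf k.+1)) by rewrite /trial_sq sf_formula; vec_ring.
by rewrite /hsub_val /model /hlin center; lra.
Qed.

Lemma hsub_val_after_serious k : bhat k.+1 = bf k.+1 ->
  model k - /2 * trial_sq k <= hsub_val k.+1.
Proof.
move=> center.
set e := vsub (vsub (bh k.+2) (bf k.+1)) (vsub (bf k.+1) (bhat k)).
have expand : dot (sf k.+1) (vsub (bh k.+2) (bf k.+1)) +
    dot (sh k.+1) (vsub (bh k.+2) (bh k.+1)) -
    dot (sh k.+1) (vsub (bf k.+1) (bh k.+1)) +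
    /2 * normD2 d (vsub (bh k.+2) (bf k.+1)) + /2 * trial_sq k = /2 * normD2 d e
  by rewrite /trial_sq sf_formula; vec_ring.
have := normD2_ge0 d_pos e; have := hlin_le k (bh k.+2).
by rewrite /hsub_val /model /hlin center; lra.
Qed.

Lemma div_gamma_ge0 c : 0 < c -> 0 <= c / gamma.
Proof. by move=> c0; apply/Rlt_le/Rdiv_lt_0_compat; lra. Qed.

Definition fejer y k := normD2 d (vsub (bhat k) y) + 2 / gamma * (obj (bhat k) - obj y).

Lemma fejer_step y : (forall z, obj y <= obj z) -> forall k, fejer y k.+1 <= fejer y k.
Proof.
move=> ymin k; rewrite /fejer.
case: (step_cases k) => [[ser center] | [_ ->]]; last lra.
have expand : normD2 d (vsub (bf k.+1) y) = normD2 d (vsub (bhat k) y) - trial_sq k -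
    2 * dot (Dmul d (vsub (bf k.+1) (bhat k))) (vsub y (bf k.+1))
  by rewrite /trial_sq; vec_ring.
have descent : 2 / gamma * (obj (bf k.+1) - obj y) <=
    2 / gamma * (obj (bhat k) - obj y) - 2 * pred_decr k.
  have -> : 2 / gamma * (obj (bhat k) - obj y) - 2 * pred_decr k =
    2 / gamma * (obj (bhat k) - obj y - gamma * pred_decr k) by field; lra.
  apply: Rmult_le_compat_l; first by apply: div_gamma_ge0; lra.
  by move: ser; rewrite /serious /pred_decr; lra.
have := model_lower k y; have := trial_sq_ge0 k; have := ymin (bhat k).
by rewrite center /pred_decr in descent *; lra.
Qed.

Lemma fejer_ge y k : (forall z, obj y <= obj z) -> normD2 d (vsub (bhat k) y) <= fejer y k.
Proof.
move=> ymin; rewrite /fejer.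
have : 0 <= 2 / gamma * (obj (bhat k) - obj y).
  by apply: Rmult_le_pos; [apply: div_gamma_ge0 | have := ymin (bhat k)]; lra.
lra.
Qed.

Section Minimizer.
Variable xs : vec p.
Hypothesis xs_min : forall z, obj xs <= obj z.

Definition merit k := obj (bhat k) - hsub_val k + 4 / gamma * (obj (bhat k) - obj xs).

Lemma excess_ge0 k : 0 <= 4 / gamma * (obj (bhat k) - obj xs).
Proof. by apply: Rmult_le_pos; [apply: div_gamma_ge0 | have := xs_min (bhat k)]; lra. Qed.

Lemma merit_ge0 k : 0 <= merit k.
Proof. by have := excess_ge0 k; have := hsub_val_le k; rewrite /merit; lra. Qed.

Lemma merit_null k : bhat k.+1 = bhat k ->
  /2 * normD2 d (vsub (bh k.+2) (bf k.+1)) + (h (bh k.+2) - hlin k (bh k.+2)) <=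
  merit k - merit k.+1.
Proof.
move=> center; have := hsub_val_model k.
have := normD2_ge0 d_pos (vsub (bf k.+1) (bh k.+1)).
by rewrite /merit (hsub_val_after_null center) center; lra.
Qed.

Lemma merit_serious k : serious k -> bhat k.+1 = bf k.+1 ->
  2 * pred_decr k <= merit k - merit k.+1.
Proof.
move=> ser center.
have descent : 4 / gamma * (obj (bhat k.+1) - obj xs) <=
    4 / gamma * (obj (bhat k) - obj xs) - 4 * pred_decr k.
  have -> : 4 / gamma * (obj (bhat k) - obj xs) - 4 * pred_decr k =
    4 / gamma * (obj (bhat k) - obj xs - gamma * pred_decr k) by field; lra.
  apply: Rmult_le_compat_l; first by apply: div_gamma_ge0; lra.
  by move: ser; rewrite center /serious /pred_decr; lra.
have := hsub_val_after_serious center; have := trial_le_pred_decr k.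
have := hsub_val_le k; have := obj_center_step k; have := pred_decr_ge0 k.
have : pred_decr k = obj (bhat k) - model k by [].
by rewrite /merit; lra.
Qed.

Lemma merit_step k : merit k.+1 <= merit k.
Proof.
have := pred_decr_ge0 k.
case: (step_cases k) => [[ser center] | [_ center]].
  by have := merit_serious ser center; lra.
have := merit_null center; have := hlin_le k (bh k.+2).
have := normD2_ge0 d_pos (vsub (bh k.+2) (bf k.+1)); lra.
Qed.

Lemma trial_gap_bound k :
  trial_sq k + normD2 d (vsub (bf k.+1) (bh k.+1)) <= 2 * merit 0.
Proof.
have := nonincreasing_le merit_step (leq0n k); have := excess_ge0 k.
have := hsub_val_model k; have := trial_le_pred_decr k.
by rewrite /merit /pred_decr; lra.
Qed.

Lemma iterates_bounded : exists r, 0 < r /\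
  forall k, in_box xs r (bhat k) /\ in_box xs r (bh k.+1).
Proof.
set E := fejer xs 0 + 2 * merit 0; set r := 1 + E * Dinv d.
have E0 : 0 <= E.
  have := fejer_ge 0 xs_min; have := normD2_ge0 d_pos (vsub (bhat 0%N) xs).
  by have := merit_ge0 0; rewrite /E; lra.
have r1 : 1 <= r by have := Rmult_le_pos _ _ E0 (Rle_trans _ _ _ Rle_0_1 (Dinv_ge1 d_pos)); rewrite /r; lra.
exists (3 * r); split => [|k]; first lra.
have center : in_box xs r (bhat k).
  move=> i; apply: (coord_bound d_pos (u := vsub (bhat k) xs)).
  have := fejer_ge k xs_min; have := nonincreasing_le (fejer_step xs_min) (leq0n k).
  by have := merit_ge0 0; rewrite /E; lra.
have [trial gap] : in_box (bhat k) r (bf k.+1) /\ in_box (bh k.+1) r (bf k.+1).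
  have := trial_gap_bound k; have := trial_sq_ge0 k.
  have := normD2_ge0 d_pos (vsub (bf k.+1) (bh k.+1)); have := fejer_ge 0 xs_min.
  have := normD2_ge0 d_pos (vsub (bhat 0%N) xs); rewrite /trial_sq => *.
  by split => i; apply: (coord_bound d_pos (u := vsub _ _)); rewrite /E; lra.
split => i; have := center i; first lra.
have := trial i; have := gap i; rewrite Rabs_minus_sym => gap_i trial_i center_i.
have := Rabs_triang (bf k.+1 i - bhat k i) (bhat k i - xs i).
have := Rabs_triang (bh k.+1 i - bf k.+1 i) (bf k.+1 i - xs i).
have -> : bf k.+1 i - bhat k i + (bhat k i - xs i) = bf k.+1 i - xs i by ring.
have -> : bh k.+1 i - bf k.+1 i + (bf k.+1 i - xs i) = bh k.+1 i - xs i by ring.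
lra.
Qed.

Lemma null_step_bound r K t k :
  modulus h xs r K -> (forall k, in_box xs r (bh k.+1)) ->
  0 < t <= 1 -> ~ serious k -> bhat k.+1 = bhat k ->
  normD2 d (vsub (bf k.+1) (bh k.+2)) * Dinv d <= t * t ->
  (1 - gamma) * pred_decr k < merit k - merit k.+1 + 2 * (t * K).
Proof.
move=> HK box t01 null center small.
have close : in_box (bh k.+2) t (bf k.+1).
  by move=> i; apply: (coord_small d_pos (u := vsub _ _)) => //; lra.
have shift := linearization_error_shift HK (sh_subgrad k) t01 (box k) (box k.+1) close.
have := merit_null center; have := normD2_ge0 d_pos (vsub (bh k.+2) (bf k.+1)).
by move: null; rewrite /serious /pred_decr /obj /model /hlin; lra.
Qed.

Lemma pred_decr_vanishes eps : 0 < eps ->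
  exists N, forall k, (N <= k)%N -> pred_decr k < eps.
Proof.
move=> eps0; have [r [r0 box]] := iterates_bounded.
have [K [K0 HK]] := convex_modulus h_convex xs r0.
set t := Rmin 1 ((1 - gamma) * eps / (4 * (K + 1))).
have t1 : t <= 1 by apply: Rmin_l.
have t0 : 0 < t by apply: Rmin_pos; [lra | apply: Rdiv_lt_0_compat; nra].
have tK : 2 * (t * K) <= (1 - gamma) * eps / 2.
  have : t * (4 * (K + 1)) <= (1 - gamma) * eps.
    apply: (Rmult_le_reg_r (/ (4 * (K + 1)))); first by apply: Rinv_0_lt_compat; lra.
    by rewrite Rmult_assoc Rinv_r ?Rmult_1_r; [apply: Rmin_r | lra].
  nra.
have Dinv1 := Dinv_ge1 d_pos.
set eta := Rmin (t * t / (2 * Dinv d)) ((1 - gamma) * eps / 2).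
have eta_t : eta * (2 * Dinv d) <= t * t.
  apply: (Rmult_le_reg_r (/ (2 * Dinv d))); first by apply: Rinv_0_lt_compat; lra.
  by rewrite Rmult_assoc Rinv_r ?Rmult_1_r; [apply: Rmin_l | lra].
have eta_eps : eta <= (1 - gamma) * eps / 2 by apply: Rmin_r.
have eta0 : 0 < eta by apply: Rmin_pos; apply: Rdiv_lt_0_compat; nra.
have [N HN] := decrements_vanish merit_step merit_ge0 eta0.
exists N => k Nk; have dec := HN k Nk.
case: (step_cases k) => [[ser center] | [null center]].
  by have := merit_serious ser center; nra.
have small : normD2 d (vsub (bf k.+1) (bh k.+2)) * Dinv d <= t * t.
  have := merit_null center; have := hlin_le k (bh k.+2).
  rewrite (normD2_sym d (bh k.+2)) => *.
  by have := normD2_ge0 d_pos (vsub (bf k.+1) (bh k.+2)); nra.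
have := null_step_bound HK (fun k => proj2 (box k)) (conj t0 t1) null center small.
move=> bound; apply: (Rmult_lt_reg_l (1 - gamma)); lra.
Qed.

(* L(bhat k) - min L <= (1 + tau/2) v_k + Q/(2 tau) for every tau > 0,
   with Q a uniform bound on ||xs - bf(k+1)||_D^2. *)
Definition dist_bound := 2 * fejer xs 0 + 4 * merit 0.

Lemma obj_gap_bound k tau : 0 < tau ->
  obj (bhat k) - obj xs <= (1 + tau / 2) * pred_decr k + dist_bound / (2 * tau).
Proof.
move=> tau0.
set u := vsub (bf k.+1) (bhat k); set w := vsub xs (bf k.+1).
have w_bound : normD2 d w <= dist_bound.
  have := normD2_triangle d_pos xs (bhat k) (bf k.+1).
  rewrite (normD2_sym d xs (bhat k)) => tri.
  have := fejer_ge k xs_min; have := nonincreasing_le (fejer_step xs_min) (leq0n k).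
  have := trial_gap_bound k; have := normD2_ge0 d_pos (vsub (bf k.+1) (bh k.+1)).
  by rewrite /dist_bound /trial_sq /w; lra.
have cross : dot (Dmul d u) w <= tau * trial_sq k / 2 + dist_bound / (2 * tau).
  apply: (Rmult_le_reg_r (2 * tau)); first lra.
  have -> : (tau * trial_sq k / 2 + dist_bound / (2 * tau)) * (2 * tau) =
    tau * tau * trial_sq k + dist_bound by field; lra.
  by have := young d_pos u w tau; rewrite /trial_sq -/u; lra.
have := model_lower k xs; have := trial_le_pred_decr k; have := pred_decr_ge0 k.
have : pred_decr k = obj (bhat k) - model k by [].
rewrite -/u -/w => *.
have : tau * trial_sq k / 2 <= tau * pred_decr k / 2 by nra.
nra.
Qed.

Lemma obj_to_min eps : 0 < eps ->
  exists N, forall k, (N <= k)%N -> obj (bhat k) <= obj xs + eps.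
Proof.
move=> eps0.
have Q0 : 0 <= dist_bound.
  have := fejer_ge 0 xs_min; have := normD2_ge0 d_pos (vsub (bhat 0%N) xs).
  by have := merit_ge0 0; rewrite /dist_bound; lra.
set tau := 1 + dist_bound / eps.
have tau1 : 1 <= tau.
  by have := Rmult_le_pos _ _ Q0 (Rlt_le _ _ (Rinv_0_lt_compat _ eps0)); rewrite /tau; lra.
have Qtau : dist_bound / (2 * tau) <= eps / 2.
  apply: (Rmult_le_reg_r (2 * tau)); first lra.
  have -> : dist_bound / (2 * tau) * (2 * tau) = dist_bound by field; lra.
  have -> : eps / 2 * (2 * tau) = eps + dist_bound by rewrite /tau; field; lra.
  lra.
have [N HN] := pred_decr_vanishes (Rdiv_lt_0_compat _ _ eps0 (ltac:(lra) : 0 < 2 + tau)).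
exists N => k Nk; have := obj_gap_bound k (ltac:(lra) : 0 < tau).
have : (1 + tau / 2) * pred_decr k <= eps / 2.
  have : pred_decr k * (2 + tau) <= eps.
    have := Rmult_lt_compat_r (2 + tau) _ _ ltac:(lra) (HN k Nk).
    have -> : eps / (2 + tau) * (2 + tau) = eps by field; lra.
    lra.
  lra.
lra.
Qed.

Lemma cluster_minimizer phi xb : strictly_increasing phi ->
  vec_lim (fun n => bhat (phi n)) xb -> forall z, obj xb <= obj z.
Proof.
move=> phi_incr lim z.
suff : obj xb <= obj xs by have := xs_min z; lra.
apply: (le_of_le_eps (C := 3)); first lra.
move=> eps eps0.
have [df [df0 lsc_f]] := convex_lsc f_convex xb eps0.
have [dh [dh0 lsc_h]] := convex_lsc h_convex xb eps0.
have [N1 HN1] := lim _ (Rmin_pos _ _ df0 dh0); have [N2 HN2] := obj_to_min eps0.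
set n := maxn N1 N2.
have near := HN1 n (leq_maxl _ _).
have := HN2 (phi n) ltac:(have := strictly_increasing_ge phi_incr n;
  have := leq_maxr N1 N2; lia).
have := lsc_f (bhat (phi n)) (fun i => Rlt_le _ _ (Rlt_le_trans _ _ _ (near i) (Rmin_l _ _))).
have := lsc_h (bhat (phi n)) (fun i => Rlt_le _ _ (Rlt_le_trans _ _ _ (near i) (Rmin_r _ _))).
by rewrite /obj; lra.
Qed.

Lemma center_bounded : exists B, forall k i, Rabs (bhat k i) <= B.
Proof.
have [r [_ box]] := iterates_bounded.
exists (r + \big[Rplus/0]_(i < p) Rabs (xs i)) => k i.
have := sum_ge_term i (fun j => Rabs_pos (xs j)); have := proj1 (box k) i.
have := Rabs_triang (bhat k i - xs i) (xs i).
have -> : bhat k i - xs i + xs i = bhat k i by ring.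
lra.
Qed.

(* At a minimizing limit xb of a subsequence, the Fejer function tends to 0:
   it is small at some phi n and nonincreasing afterwards. *)
Lemma fejer_vanishes phi xb : strictly_increasing phi ->
  vec_lim (fun n => bhat (phi n)) xb -> (forall z, obj xb <= obj z) ->
  forall eps, 0 < eps -> exists N, forall k, (N <= k)%N -> fejer xb k < eps.
Proof.
move=> phi_incr lim xb_min eps eps0.
have Ds0 := Dsum_ge0 d_pos.
set rho := Rmin 1 (eps / (2 * (Dsum d + 1))).
have rho0 : 0 < rho by apply: Rmin_pos; [lra | apply: Rdiv_lt_0_compat; lra].
have rho_eps : rho * rho * Dsum d <= eps / 2.
  have : rho * (2 * (Dsum d + 1)) <= eps.
    apply: (Rmult_le_reg_r (/ (2 * (Dsum d + 1)))); first by apply: Rinv_0_lt_compat; lra.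
    by rewrite Rmult_assoc Rinv_r ?Rmult_1_r; [apply: Rmin_r | lra].
  have : rho <= 1 by apply: Rmin_l.
  nra.
have [N1 HN1] := lim rho rho0.
have [N2 HN2] := obj_to_min (ltac:(nra) : 0 < gamma * eps / 8).
set n := maxn N1 N2; exists (phi n) => k nk.
apply: Rle_lt_trans (nonincreasing_le (fejer_step xb_min) nk) _.
have := normD2_small d_pos (u := vsub (bhat (phi n)) xb) (fun i => Rlt_le _ _ (HN1 n (leq_maxl _ _) i)).
have := HN2 (phi n) ltac:(have := strictly_increasing_ge phi_incr n;
  have := leq_maxr N1 N2; lia).
have := xs_min xb; rewrite /fejer => *.
have : 2 / gamma * (obj (bhat (phi n)) - obj xb) <= eps / 4.
  have -> : eps / 4 = 2 / gamma * (gamma * eps / 8) by field; lra.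
  by apply: Rmult_le_compat_l; [apply: div_gamma_ge0 | ]; lra.
lra.
Qed.

Lemma center_limit : exists xb, (forall z, obj xb <= obj z) /\
  forall eps, 0 < eps -> exists N, forall k, (N <= k)%N -> fejer xb k < eps.
Proof.
have [B bounded] := center_bounded.
have [phi [phi_incr [xb lim]]] := bolzano_weierstrass bounded.
have xb_min := cluster_minimizer phi_incr lim.
by exists xb; split => //; apply: fejer_vanishes.
Qed.

End Minimizer.

(* The subgradient inequality of sf(k+1) at a minimizer x holds up to the
   error 3 v_k + ||bhat k - x||^2; likewise for sh(k+1). *)
Lemma trial_cross_bound k x :
  dot (Dmul d (vsub (bf k.+1) (bhat k))) (vsub x (bf k.+1)) <=
  3 / 2 * pred_decr k + normD2 d (vsub (bhat k) x).
Proof.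
have := young d_pos (vsub (bf k.+1) (bhat k)) (vsub x (bf k.+1)) 1.
have := normD2_triangle d_pos x (bhat k) (bf k.+1).
rewrite (normD2_sym d x (bhat k)) => tri.
have := trial_le_pred_decr k; rewrite /trial_sq; lra.
Qed.

Definition subgrad_error x k := 3 * pred_decr k + normD2 d (vsub (bhat k) x).

Lemma sf_approx_subgrad x k y : (forall z, obj x <= obj z) ->
  f x + dot (sf k.+1) (vsub y x) - subgrad_error x k <= f y.
Proof.
move=> xmin; have := model_lower_f k y x; have := trial_cross_bound k x.
have := xmin (bhat k); have := pred_decr_ge0 k.
have : pred_decr k = obj (bhat k) - model k by [].
by rewrite /subgrad_error /obj; lra.
Qed.

Lemma sh_approx_subgrad x k z : (forall y, obj x <= obj y) ->
  h x + dot (sh k.+1) (vsub z x) - subgrad_error x k <= h z.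
Proof.
move=> xmin; have := model_lower_h k x z; have := trial_cross_bound k x.
have := xmin (bhat k); have := pred_decr_ge0 k.
have : pred_decr k = obj (bhat k) - model k by [].
by rewrite /subgrad_error /obj; lra.
Qed.

Lemma subgrad_error_vanishes x : (forall z, obj x <= obj z) ->
  (forall eps, 0 < eps -> exists N, forall k, (N <= k)%N -> fejer x k < eps) ->
  forall eps, 0 < eps -> exists N, forall k, (N <= k)%N -> subgrad_error x k < eps.
Proof.
move=> xmin fejer0 eps eps0.
have [N1 HN1] := pred_decr_vanishes xmin (ltac:(lra) : 0 < eps / 6).
have [N2 HN2] := fejer0 (eps / 2) ltac:(lra).
exists (maxn N1 N2) => k Nk; have := fejer_ge k xmin.
by have := HN1 k ltac:(lia); have := HN2 k ltac:(lia); rewrite /subgrad_error; lra.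
Qed.

(* sf(k+1) + sh(k+1) = -D(bf(k+1) - bhat k) is of size O(sqrt v_k). *)
Lemma subgrad_sum_sq k i :
  (sf k.+1 i + sh k.+1 i) * (sf k.+1 i + sh k.+1 i) <= d i * pred_decr k.
Proof.
have -> : sf k.+1 i + sh k.+1 i = - (d i * (bf k.+1 i - bhat k i))
  by rewrite sf_formula /vsub /vscale /Dmul; ring.
have := normD2_coord d_pos (vsub (bf k.+1) (bhat k)) i; have := d_pos i.
have := trial_le_pred_decr k; rewrite /trial_sq /vsub => *; nra.
Qed.

Lemma subgrad_sum_vanishes x : (forall z, obj x <= obj z) ->
  forall i eps, 0 < eps ->
  exists N, forall k, (N <= k)%N -> Rabs (sf k.+1 i + sh k.+1 i) < eps.
Proof.
move=> xmin i eps eps0; have di := d_pos i.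
have [N HN] := pred_decr_vanishes xmin (Rdiv_lt_0_compat (eps * eps) (d i) ltac:(nra) di).
exists N => k Nk.
have bound : (sf k.+1 i + sh k.+1 i) * (sf k.+1 i + sh k.+1 i) < eps * eps.
  apply: Rle_lt_trans (subgrad_sum_sq k i) _.
  have -> : eps * eps = d i * (eps * eps / d i) by field; lra.
  by apply: Rmult_lt_compat_l => //; apply: HN.
by rewrite /Rabs; case: Rcase_abs => ?; nra.
Qed.

Lemma centers_converge x : (forall z, obj x <= obj z) ->
  (forall eps, 0 < eps -> exists N, forall k, (N <= k)%N -> fejer x k < eps) ->
  forall i, Un_cv (fun k => bhat k i) (x i).
Proof.
move=> xmin fejer0; apply: Un_cv_of_normD2 d_pos _ => eps eps0.
have [N HN] := fejer0 eps eps0; exists N => k Nk.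
by have := fejer_ge k xmin; have := HN k Nk; lra.
Qed.

End AlternatingLinearization.

Unset Implicit Arguments.

Theorem theorem1 (p : nat) (f h : vec p -> R) (d : vec p) (gamma : R)
  (bhat bf bh sf sh : nat -> vec p) :
  convex_fun f -> convex_fun h ->
  (exists x : vec p, is_minimizer (fun b => f b + h b) x) ->
  (forall i : 'I_p, 0 < d i) ->
  0 < gamma < 1 ->
  bf 0%nat = bhat 0%nat ->
  subgrad f (bf 0%nat) (sf 0%nat) ->
  (forall k : nat, alin_step f h d gamma bhat bf bh sf sh k) ->
  exists bstar : vec p,
    is_minimizer (fun b => f b + h b) bstar /\
    (forall i : 'I_p, Un_cv (fun k => bhat k i) (bstar i)) /\
    (forall sfs shs : vec p, accum_point2 sf sh sfs shs ->
       subgrad f bstar sfs /\ subgrad h bstar shs /\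
       (forall i : 'I_p, sfs i + shs i = 0)).
Proof.
move=> f_cvx h_cvx [xs xs_min] d_pos gamma01 _ sf0 step.
have [xb [xb_min fejer0]] := center_limit f_cvx h_cvx d_pos gamma01 sf0 step xs_min.
exists xb; split; first exact: xb_min.
split; first exact: (centers_converge d_pos gamma01 xb_min fejer0).
move=> sfs shs acc; have acc1 := accum_point2_shift acc.
have err0 := subgrad_error_vanishes f_cvx h_cvx d_pos gamma01 sf0 step xb_min fejer0.
split; [|split].
- apply: (subgrad_of_cluster _ err0 (accum_point2_fst acc1)) => k y.
  exact: (sf_approx_subgrad f_cvx h_cvx d_pos sf0 step k y xb_min).
- apply: (subgrad_of_cluster _ err0 (accum_point2_snd acc1)) => k z.
  exact: (sh_approx_subgrad f_cvx h_cvx d_pos sf0 step k z xb_min).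
- exact: (sum_zero_of_cluster
    (subgrad_sum_vanishes f_cvx h_cvx d_pos gamma01 sf0 step xb_min) acc1).
Qed.
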